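(* For any $\alpha\ge1$, $\gamma>1$ and $\varepsilon>0$ there exists an instance and an outcome in it which satisfies $\alpha$-proportional fairness but is not in the $\left(\gamma,\frac{\gamma\alpha+1}{\gamma-1}-\varepsilon\right)$-transferable core.
   Context: Let $(\mathcal X,d)$ be a metric space, $N=[n]$ a set of agents and $C$ a set of candidates located in $\mathcal X$, $k\in\mathbb N^+$; an outcome is $W\subseteq C$ with $|W|\le k$; $d(i,W)=\min_{c\in W}d(i,c)$. $\alpha$-proportional fairness: there is no group $N'\subseteq N$ with $|N'|\ge n/k$ and candidate $c\in C\setminus W$ such that $\alpha\, d(i,c)<d(i,W)$ for all $i\in N'$. $(\gamma,\alpha)$-transferable core: $W$ is in it if there is no group $N'\subseteq N$ and candidate $c\in C\setminus W$ with $|N'|\ge\gamma n/k$ and $\alpha\sum_{i\in N'}d(i,c)<\sum_{i\in N'}d(i,W)$. *)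

From HB Require Import structures.
From mathcomp Require Import all_boot all_order all_algebra.
From mathcomp Require Import reals.
Set Implicit Arguments. Unset Strict Implicit. Unset Printing Implicit Defensive.
Import Order.TTheory GRing.Theory Num.Theory.
Local Open Scope ring_scope.

Section Defs.
Variable R : realType.

Definition is_metric (X : Type) (d : X -> X -> R) : Prop :=
  (forall x y, 0 <= d x y) /\
  (forall x y, d x y = 0 <-> x = y) /\
  (forall x y, d x y = d y x) /\
  (forall x y z, d x z <= d x y + d y z).

Variables (X : Type) (d : X -> X -> R) (n m : nat)
  (agent : 'I_n -> X) (cand : 'I_m -> X).

(* d(i, W) = min_{c in W} d(i, c); only meaningful for nonempty W
   (set to 0 for W empty, which never arises below). *)
Definition distW (W : {set 'I_m}) (i : 'I_n) : R :=
  if [pick c in W] is Some c0 then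
    \big[Num.min/d (agent i) (cand c0)]_(c in W) d (agent i) (cand c)
  else 0.

Definition prop_fair (k : nat) (alpha : R) (W : {set 'I_m}) : Prop :=
  ~ exists (N' : {set 'I_n}) (c : 'I_m),
      [/\ (n%:R / k%:R : R) <= #|N'|%:R, c \notin W &
          forall i, i \in N' -> alpha * d (agent i) (cand c) < distW W i].

Definition in_tcore (k : nat) (gamma alpha : R) (W : {set 'I_m}) : Prop :=
  ~ exists (N' : {set 'I_n}) (c : 'I_m),
      [/\ (gamma * n%:R / k%:R : R) <= #|N'|%:R, c \notin W &
          alpha * (\sum_(i in N') d (agent i) (cand c)) < \sum_(i in N') distW W i].
End Defs.

(** Three points [c], [w], [y] with [d(c,w) = 1 + alpha], [d(c,y) = 1] and
    [d(w,y) = alpha] form a metric space.  Put [p] agents on [c] and [T - p]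
    on [y], with [T] seats, [T (p + 1)] agents and the outcome [W = {w}].  A
    deviation to [c] only strictly convinces the [p] agents sitting on it,
    which is short of the quota [n/k = p + 1], so [W] is [alpha]-proportionally
    fair.  But the first [T >= gamma (p + 1)] agents, moving to [c] together,
    pay [T - p] instead of [(1 + alpha) p + alpha (T - p)]; as [p] grows,
    [(T - p)/p] tends to [gamma - 1], so the ratio of these costs tends to
    [(gamma alpha + 1)/(gamma - 1)]. *)
From HB Require Import structures.
From mathcomp Require Import all_boot all_order all_algebra.
From mathcomp Require Import reals archimedean.
From mathcomp Require Import ring lra.
Import Order.TTheory GRing.Theory Num.Theory.
Local Open Scope ring_scope.

Lemma distW_set1 (R : realType) (X : Type) (d : X -> X -> R) (n m : nat)
    (agent : 'I_n -> X) (cand : 'I_m -> X) (a : 'I_m) (i : 'I_n) :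
  distW d agent cand [set a] i = d (agent i) (cand a).
Proof.
rewrite /distW; case: pickP => [c|/(_ a)]; last by rewrite set11.
by rewrite in_set1 => /eqP ->; rewrite big_set1E minxx.
Qed.

Lemma sum_ord_lt {V : nmodType} {n T : nat} (F : nat -> V) : (T <= n)%N ->
  \sum_(i in [set i : 'I_n | (i < T)%N]) F i = \sum_(0 <= i < T) F i.
Proof.
move=> le_Tn; rewrite big_mkord (big_ord_widen_cond n xpredT F le_Tn).
by apply: eq_bigl => i; rewrite inE.
Qed.

Lemma card_ord_lt {n T : nat} : (T <= n)%N -> #|[set i : 'I_n | (i < T)%N]| = T.
Proof.
move=> le_Tn; rewrite -sum1_card (eq_bigl (fun i : 'I_n => (i < T)%N)) => [|i].
  by rewrite (big_ord_narrow le_Tn) sum_nat_const card_ord muln1.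
by rewrite inE.
Qed.

Lemma sum_nat_if_lt (V : nmodType) (p T : nat) (a b : V) : (p <= T)%N ->
  \sum_(0 <= i < T) (if (i < p)%N then a else b) = a *+ p + b *+ (T - p).
Proof.
move=> le_pT; rewrite (big_cat_nat (leq0n p) le_pT) /=.
rewrite (@eq_big_nat _ _ _ 0 p _ (fun=> a)); last by move=> i /andP[_ ->].
rewrite (@eq_big_nat _ _ _ p T _ (fun=> b)); last by move=> i /andP[/leq_gtF ->].
by rewrite !sumr_const_nat subn0.
Qed.

Variant point := pc | pw | py.

(* [a], [b], [c] are the lengths of the sides opposite to [pc], [pw], [py]. *)
Definition tri_dist {R : realType} (a b c : R) (x y : point) : R :=
  match x, y with
  | pc, pc | pw, pw | py, py => 0
  | pw, py | py, pw => a
  | pc, py | py, pc => b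
  | pc, pw | pw, pc => c
  end.

Lemma tri_dist_metric (R : realType) (a b c : R) : 0 < a -> 0 < b -> 0 < c ->
  a <= b + c -> b <= c + a -> c <= a + b -> is_metric (tri_dist a b c).
Proof.
move=> a_gt0 b_gt0 c_gt0 le_a le_b le_c.
split; [|split; [|split]].
- by case; case => /=; lra.
- by case; case => /=; split => // /eqP; rewrite ?gt_eqF.
- by case; case.
- by case; case; case => /=; lra.
Qed.

Section Instance.
Variables (R : realType) (alpha : R) (p T : nat).
Hypothesis lt_pT : (p < T)%N.

Let d := tri_dist alpha 1 (1 + alpha).
Let n := (T * p.+1)%N.

Definition agent_at (i : nat) : point := if (i < p)%N then pc else py.
Definition agent (i : 'I_n) : point := agent_at i.
Definition cand (j : 'I_2) : point := if j == ord0 then pw else pc.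

Lemma quota_instance : n%:R / T%:R = p.+1%:R :> R.
Proof.
have T_neq0 : T%:R != 0 :> R by rewrite pnatr_eq0 -lt0n (leq_ltn_trans _ lt_pT).
by rewrite natrM mulrC mulKf.
Qed.

Let le_Tn : (T <= n)%N := leq_pmulr T (ltn0Sn p).

Lemma sum_first_agents (G : point -> R) :
  \sum_(i in [set i : 'I_n | (i < T)%N]) G (agent i) = G pc *+ p + G py *+ (T - p).
Proof.
move: (sum_ord_lt (fun i => G (agent_at i)) le_Tn) => /= ->.
rewrite -sum_nat_if_lt; last exact: ltnW.
by apply: eq_bigr => i _; rewrite /agent_at; case: ifP.
Qed.

Lemma instance_prop_fair : prop_fair d agent cand T alpha [set ord0].
Proof.
case=> N' [c [quota_le c_notin prefer_c]].
have cand_c : cand c = pc by move: c_notin; rewrite in_set1 /cand => /negPf ->.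
have N'_sub : N' \subset [set i : 'I_n | (i < p)%N].
  apply/subsetP => i /prefer_c; rewrite distW_set1 cand_c inE /agent /agent_at.
  by case: ifP => //= _; rewrite mulr1 ltxx.
have card_N' : (#|N'| <= p)%N.
  by rewrite -(card_ord_lt (ltnW (leq_trans lt_pT le_Tn))) subset_leq_card.
by move: quota_le; rewrite quota_instance ler_nat => /leq_trans/(_ card_N'); rewrite ltnn.
Qed.

Lemma instance_not_in_tcore (gamma beta : R) :
  gamma * p.+1%:R <= T%:R ->
  (beta - alpha) * (T%:R - p%:R) < (1 + alpha) * p%:R ->
  ~ in_tcore d agent cand T gamma beta [set ord0].
Proof.
move=> quota_le gain; apply; exists [set i : 'I_n | (i < T)%N], ord_max; split.
- by rewrite card_ord_lt; [rewrite -mulrA quota_instance | exact: le_Tn].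
- by rewrite in_set1.
- under [X in _ < X]eq_bigr do rewrite distW_set1.
  rewrite (sum_first_agents (d^~ (cand ord_max))) (sum_first_agents (d^~ (cand ord0))) /=.
  rewrite mul0rn add0r -[(1 + alpha) *+ _]mulr_natr -[alpha *+ _]mulr_natr.
  by rewrite natrB; [lra | exact: ltnW].
Qed.

End Instance.

Lemma exists_ratio_witness {R : archiRealFieldType} {gamma z a : R} :
  1 < gamma -> z * (gamma - 1) < a ->
  exists p T : nat, [/\ (p < T)%N, gamma * p.+1%:R <= T%:R &
                        z * (T%:R - p%:R) < a * p%:R].
Proof.
move=> gamma_gt1 z_lt.
pose delta := a - z * (gamma - 1).
have delta_gt0 : 0 < delta by rewrite subr_gt0.
pose p := (Num.truncn (`|z| * (gamma + 1) / delta)).+1.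
have p_large : `|z| * (gamma + 1) < delta * p%:R.
  by rewrite [delta * _]mulrC -ltr_pdivrMr //; apply: truncnS_gt.
pose T := (Num.truncn (gamma * p.+1%:R)).+1.
have T_gt : gamma * p.+1%:R < T%:R by apply: truncnS_gt.
have T_le : T%:R <= gamma * p.+1%:R + 1.
  by rewrite /T -addn1 natrD lerD2r truncn_le mulr_ge0 ?ler0n //; lra.
have lt_pT : (p < T)%N.
  rewrite -(ltr_nat R); apply: le_lt_trans T_gt; rewrite -natr1.
  by have := ler0n R p; nra.
exists p, T; split => //; first exact: ltW.
(* [z (T - p) = z (gamma - 1) p + z (T - gamma p)] with [gamma <= T - gamma p <= gamma + 1]. *)
have err_bound : z * (T%:R - gamma * p%:R) <= `|z| * (gamma + 1).
  apply: le_trans (ler_norm _) _; rewrite normrM ler_wpM2l //.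
  by rewrite ger0_norm; move: T_gt T_le; rewrite -addn1 natrD; lra.
have -> : z * (T%:R - p%:R) = z * (gamma - 1) * p%:R + z * (T%:R - gamma * p%:R).
  by ring.
by move: err_bound p_large; rewrite /delta; lra.
Qed.

Theorem theorem4 (R : realType) (alpha gamma eps : R) :
  1 <= alpha -> 1 < gamma -> 0 < eps ->
  exists (X : Type) (d : X -> X -> R), is_metric d /\
  exists (n m k : nat) (agent : 'I_n -> X) (cand : 'I_m -> X) (W : {set 'I_m}),
    [/\ [/\ (0 < n)%N, (0 < k)%N, W != set0 & (#|W| <= k)%N],
        prop_fair d agent cand k alpha W &
        ~ in_tcore d agent cand k gamma ((gamma * alpha + 1) / (gamma - 1) - eps) W].
Proof.
move=> alpha_ge1 gamma_gt1 eps_gt0.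
set beta := (gamma * alpha + 1) / (gamma - 1) - eps.
have beta_lt : (beta - alpha) * (gamma - 1) < 1 + alpha.
  have gamma1_neq0 : gamma - 1 != 0 by rewrite subr_eq0 gt_eqF.
  rewrite /beta !mulrBl mulfVK //.
  have : 0 < eps * (gamma - 1) by apply: mulr_gt0; lra.
  lra.
have [p [T [lt_pT quota_le gain]]] := exists_ratio_witness gamma_gt1 beta_lt.
have T_gt0 : (0 < T)%N := leq_ltn_trans (leq0n p) lt_pT.
exists point, (tri_dist alpha 1 (1 + alpha)); split.
  by apply: tri_dist_metric; lra.
exists (T * p.+1)%N, 2%N, T, (agent p T), cand, [set ord0]; split.
- split; rewrite ?muln_gt0 ?T_gt0 ?cards1 //.
  by apply/set0Pn; exists ord0; rewrite set11.
- exact: instance_prop_fair.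
- exact: instance_not_in_tcore.
Qed.
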